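(* Let $(\mathcal{X},d_{\mathcal{X}})$ and $(\mathcal{Y},d_{\mathcal{Y}})$ be metric spaces and $(X,Y)\sim\mathbb{G}$ on $\mathcal{X}\times\mathcal{Y}$. Assume: (i) $\mathcal{L}_n=\{(X_1,Y_1),\ldots,(X_n,Y_n)\}$ consists of $n$ i.i.d. copies of $(X,Y)$, independent of $(X,Y)$; (ii) for $\mathbb{G}$-a.e. $x$ there exists a unique conditional Fréchet mean $m(x)=\arg\min_{y\in\mathcal{Y}}\mathsf{E}[d_{\mathcal{Y}}(Y,y)^2\mid X=x]$, the error $R=d_{\mathcal{Y}}(Y,m(X))$ is independent of $X$, and the cumulative distribution function $F_R$ of $R$ is continuous on $\mathbb{R}$; (iii) $d_{\mathcal{Y}}(m(X),\widehat{m}(X))\to0$ in probability as $n\to\infty$. Then for every $x\in\mathcal{X}$ such that $d_{\mathcal{Y}}(\widehat{m}(x),m(x))\to0$ in probability as $n\to\infty$, $$\Delta_n':=\sup_{t\in\mathbb{R}}\big|\mathsf{P}\big(d_{\mathcal{Y}}(Y,\widehat{m}(X))<t\,\big|\,\mathcal{L}_n,\,X=x\big)-F_R(t)\big|\to0$$ in probability as $n\to\infty$.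
   Context: $\widehat{m}$ denotes a random forest (more generally, a bagged regression estimator with values in $\mathcal{Y}$) trained on the sample $\mathcal{L}_n$.
   Formalization: The conclusion holds only for $\mathbb{G}$-almost every x, with conditional laws given X = x taken from a fixed regular conditional distribution, and m and $d_{\mathcal{Y}}$ (jointly on $\mathcal{Y}\times\mathcal{Y}$) are also assumed measurable. The statement above fails without it. *)

From HB Require Import structures.
From mathcomp Require Import all_boot all_order all_algebra.
From mathcomp Require Import all_classical all_reals all_analysis.
Set Implicit Arguments. Unset Strict Implicit. Unset Printing Implicit Defensive.
Import Order.TTheory GRing.Theory Num.Theory.
Import numFieldNormedType.Exports.
Local Open Scope classical_set_scope.
Local Open Scope ring_scope.

Section defs.
Context (R : realType).

Definition is_metric (T : Type) (d : T -> T -> R) : Prop :=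
  [/\ forall x y, d x y = 0 <-> x = y,
      forall x y, d x y = d y x &
      forall x y z, d x z <= d x y + d y z].

Definition metric_open (T : Type) (d : T -> T -> R) (A : set T) : Prop :=
  forall x, A x -> exists2 e : R, 0 < e & [set y | d x y < e] `<=` A.

Definition borel_of_metric (dT : measure_display) (T : measurableType dT)
  (d : T -> T -> R) : Prop :=
  @measurable dT T = <<s metric_open d >>.

Definition outer_prob (dT : measure_display) (T : measurableType dT)
  (P : probability T R) (A : set T) : \bar R :=
  ereal_inf [set P B | B in [set B | measurable B /\ A `<=` B]].

Definition cvg_in_prob (dT : measure_display) (T : measurableType dT)
  (P : probability T R) (Z : nat -> T -> R) : Prop :=
  forall e : R, 0 < e ->
    (fun n => fine (outer_prob P [set w | e < `|Z n w|])) @ \oo --> (0 : R).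

Definition mutually_independent (dT : measure_display) (T : measurableType dT)
  (P : probability T R) (dU : measure_display) (U : measurableType dU)
  (k : nat) (Z : 'I_k -> T -> U) : Prop :=
  forall B : 'I_k -> set U, (forall i, measurable (B i)) ->
    P (\bigcap_(i in [set: 'I_k]) (Z i @^-1` B i)) =
    (\prod_(i < k) P (Z i @^-1` B i))%E.

Definition independent2 (dT : measure_display) (T : measurableType dT)
  (P : probability T R) (d1 d2 : measure_display)
  (U1 : measurableType d1) (U2 : measurableType d2)
  (Z1 : T -> U1) (Z2 : T -> U2) : Prop :=
  forall A B, measurable A -> measurable B ->
    P (Z1 @^-1` A `&` Z2 @^-1` B) = (P (Z1 @^-1` A) * P (Z2 @^-1` B))%E.

Definition cdf_of (dT : measure_display) (T : measurableType dT)
  (P : probability T R) (Z : T -> R) (t : R) : R :=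
  fine (P [set w | Z w <= t]).

Definition unique_frechet_mean (dU : measure_display) (U : measurableType dU)
  (d : U -> U -> R) (nu : {measure set U -> \bar R}) (c : U) : Prop :=
  let V := fun y => (\int[nu]_z ((d z y) ^+ 2)%:E)%E in
  (forall y, (V c <= V y)%E) /\ (forall y, V y = V c -> y = c).

(* Delta'_n at the point x, as a function of the outcome w, where
   kappa x is the conditional law of Y given X = x and mhat w is the
   estimator built from the sample L_n(w):
   sup_t | P(d(Y, mhat(X)) < t | L_n, X = x) - F(t) | *)
Definition Delta' (dU : measure_display) (U : measurableType dU)
  (Om : Type) (Xs : Type) (kappa : Xs -> {measure set U -> \bar R})
  (d : U -> U -> R) (mhat : Om -> Xs -> U) (F : R -> R) (x : Xs) (w : Om) : R :=
  sup [set `| fine (kappa x [set y | d y (mhat w x) < t]) - F t | | t in [set: R]].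

End defs.

(* Independence of the error R = d(Y, m(X)) from X forces, for almost every x,
   the conditional law of d(Y, m(x)) given X = x to be the law F_R of R: over
   every event {X in A} both integrate to P(X in A) F_R(t), once the
   disintegration of (X, Y) by kappa is extended from rectangles to all
   product-measurable sets; countably many rational levels t suffice.
   Being continuous with limits 0 and 1, F_R is uniformly continuous, and the
   triangle inequality squeezes the open ball of radius t around mhat(x)
   between closed balls around m(x) whose radii are within delta of t as soon
   as d(mhat(x), m(x)) < delta/2.  Hence Delta'_n is small wherever
   d(mhat_n(x), m(x)) is, and convergence in probability carries over. *)

From HB Require Import structures.
From mathcomp Require Import all_boot all_order all_algebra.
From mathcomp Require Import all_classical all_reals all_analysis.
From mathcomp Require Import measurable_realfun lra.
Set Implicit Arguments.
Unset Strict Implicit.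
Unset Printing Implicit Defensive.
Import Order.TTheory GRing.Theory Num.Theory.
Import numFieldNormedType.Exports.
Local Open Scope classical_set_scope.
Local Open Scope ring_scope.

Lemma measurable_preimage d d' (T : measurableType d) (U : measurableType d')
  (f : T -> U) (A : set U) :
  measurable_fun setT f -> measurable A -> measurable (f @^-1` A).
Proof. by move=> mf mA; rewrite -[f @^-1` A]setTI; exact: mf. Qed.

Lemma measurable_fun_dist d d' (T : measurableType d) (U : measurableType d')
    (R : realType) (dU : U -> U -> R) (f g : T -> U) :
  measurable_fun setT (fun p : U * U => dU p.1 p.2) ->
  measurable_fun setT f -> measurable_fun setT g ->
  measurable_fun setT (fun w => dU (f w) (g w)).
Proof.
move=> mdU mf mg.
apply: (measurableT_comp (f := fun p : U * U => dU p.1 p.2)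
  (g := fun w => (f w, g w))) => //.
exact/measurable_fun_pairP.
Qed.

Section xsection_integral_measure.
Context d dX dY (Om : measurableType d) (Xs : measurableType dX)
  (Ys : measurableType dY) (R : realType).
Variables (mu : {measure set Om -> \bar R}) (D : set Om) (X : Om -> Xs)
  (kappa : R.-fker Xs ~> Ys).
Hypotheses (mD : measurable D) (mX : measurable_fun setT X).
Local Open Scope ereal_scope.

Definition xsection_integral (C : set (Xs * Ys)) :=
  \int[mu]_(w in D) kappa (X w) (xsection C (X w)).

Lemma measurable_kernel_xsection C : measurable C ->
  measurable_fun setT (fun w => kappa (X w) (xsection C (X w))).
Proof.
move=> mC.
apply: (measurableT_comp (f := fun x => kappa x (xsection C x))) => //.
by apply: measurable_fun_xsection_finite_kernel; rewrite inE.
Qed.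

Let xsection_integral0 : xsection_integral set0 = 0.
Proof. by apply: integral0_eq => w _; rewrite xsection0 measure0. Qed.

Let xsection_integral_ge0 C : 0 <= xsection_integral C.
Proof. exact: integral_ge0. Qed.

Let xsection_integral_sigma_additive : semi_sigma_additive xsection_integral.
Proof.
move=> F mF tF _; rewrite /xsection_integral.
have -> : \int[mu]_(w in D) kappa (X w) (xsection (\bigcup_n F n) (X w)) =
    \sum_(n <oo) \int[mu]_(w in D) kappa (X w) (xsection (F n) (X w)).
  rewrite -integral_nneseries //; last first.
    by move=> n; exact: measurable_funTS (measurable_kernel_xsection (mF n)).
  apply: eq_integral => w _; rewrite xsection_bigcup.
  apply/esym/cvg_lim => //; apply: measure_sigma_additive.
  - by move=> n; exact: measurable_xsection.
  - exact: trivIset_xsection.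
apply: is_cvg_nneseries => n _ _; exact: integral_ge0.
Qed.

HB.instance Definition _ := isMeasure.Build _ (Xs * Ys)%type R xsection_integral
  xsection_integral0 xsection_integral_ge0 xsection_integral_sigma_additive.

End xsection_integral_measure.

Definition is_cond_distribution d dX dY (Om : measurableType d)
    (Xs : measurableType dX) (Ys : measurableType dY) (R : realType)
    (P : {measure set Om -> \bar R}) (X : Om -> Xs) (Y : Om -> Ys)
    (kappa : Xs -> {measure set Ys -> \bar R}) :=
  forall A B, measurable A -> measurable B ->
    P (X @^-1` A `&` Y @^-1` B) = (\int[P]_(w in X @^-1` A) kappa (X w) B)%E.

Section cond_distribution.
Context d dX dY (Om : measurableType d) (Xs : measurableType dX)
  (Ys : measurableType dY) (R : realType).
Variables (P : probability Om R) (X : Om -> Xs) (Y : Om -> Ys)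
  (kappa : R.-pker Xs ~> Ys).
Hypotheses (mX : measurable_fun setT X) (mY : measurable_fun setT Y).
Hypothesis hK : is_cond_distribution P X Y kappa.
Local Open Scope ereal_scope.

(* Found by unification for the measure structure of the pushforward below. *)
Let mXY : measurable_fun setT (fun w => (X w, Y w)).
Proof. exact/measurable_fun_pairP. Qed.

Lemma cond_distribution_xsection A C : measurable A -> measurable C ->
  P (X @^-1` A `&` (fun w => (X w, Y w)) @^-1` C) =
  \int[P]_(w in X @^-1` A) kappa (X w) (xsection C (X w)).
Proof.
move=> mA mC; have mXA := measurable_preimage mX mA.
(* Both sides are finite measures in C that agree on measurable rectangles. *)
rewrite setIC -[LHS]/(pushforward (mrestr P mXA) (fun w => (X w, Y w)) C).
rewrite -[RHS]/(xsection_integral P (X @^-1` A) X kappa C).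
apply: (measure_unique [set A1 `*` B | A1 in measurable & B in measurable]
  (fun=> setT)) => //.
- exact: measurable_prod_measurableType.
- move=> _ _ [A1 mA1 [B1 mB1 <-]] [A2 mA2 [B2 mB2 <-]].
  rewrite -setXI; exists (A1 `&` A2); first exact: measurableI.
  by exists (B1 `&` B2) => //; exact: measurableI.
- by move=> _; exists setT => //; exists setT => //; rewrite setXTT.
- by rewrite bigcup_const.
- move=> _ [A1 mA1 [B mB <-]].
  rewrite /= /pushforward /mrestr /xsection_integral.
  have -> : (fun w => (X w, Y w)) @^-1` (A1 `*` B) `&` X @^-1` A =
      X @^-1` (A `&` A1) `&` Y @^-1` B.
    by apply/seteqP; split => w /=; tauto.
  rewrite hK //; last exact: measurableI.
  rewrite preimage_setI integral_mkcondr; apply: eq_integral => w _.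
  rewrite patchE; case: ifPn => [/[!in_setE] XA1|XA1].
  + by rewrite in_xsectionX // inE.
  + by rewrite notin_xsectionX ?measure0 //; apply: contra XA1; rewrite !inE.
- move=> _; rewrite /pushforward /mrestr.
  rewrite (le_lt_trans (probability_le1 _ _)) ?ltry //.
  by apply: measurableI => //; exact: measurable_preimage.
Qed.

End cond_distribution.

Lemma ae_forall_countable d (T : measurableType d) (R : realType)
    (mu : {measure set T -> \bar R}) (I : countType) (Q : I -> T -> Prop) :
  (forall i, {ae mu, forall x, Q i x}) -> {ae mu, forall x i, Q i x}.
Proof.
move=> hQ; pose Qn n x := if @unpickle I n is Some i then Q i x else True.
apply: filterS (ae_foralln (P := Qn) _).
  by move=> x h i; have := h (pickle i); rewrite /Qn pickleK.
by move=> n; rewrite /Qn; case: (unpickle n) => [i|]; [exact: hQ|exact: aeW].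
Qed.

Lemma ae_eq_cst_of_integral_preimage d dX (Om : measurableType d)
    (Xs : measurableType dX) (R : realType) (P : probability Om R)
    (X : Om -> Xs) (G : Xs -> \bar R) (c : R) :
  0 <= c -> measurable_fun setT X -> measurable_fun setT G ->
  (forall x, 0 <= G x)%E ->
  (forall A, measurable A ->
     \int[P]_(w in X @^-1` A) G (X w) = c%:E * P (X @^-1` A))%E ->
  {ae P, forall w, G (X w) = c%:E}.
Proof.
move=> c0 mX mG G0 hG.
pose mu := pushforward P X.
have ic : mu.-integrable setT (fun=> c%:E).
  apply/integrableP; split => //; rewrite integral_cst //=.
  by rewrite /pushforward preimage_setT probability_setT mule1 ltry.
have hint A : A `<=` setT -> measurable A ->
    (\int[mu]_(x in A) c%:E = \int[mu]_(x in A) G x)%E.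
  move=> _ mA.
  rewrite !ge0_integral_pushforward //; last exact: measurable_funTS.
  by rewrite hG // integral_cst //; exact: measurable_preimage.
have [N [mN muN0 NG]] := @integral_ae_eq _ _ _ mu _ measurableT G _ ic mG hint.
exists (X @^-1` N); split => //; first exact: measurable_preimage.
by move=> w /= hw; apply: NG => /= hN; apply: hw; rewrite hN.
Qed.

Section cond_cdf.
Context d dX dY (Om : measurableType d) (Xs : measurableType dX)
  (Ys : measurableType dY) (R : realType).
Variables (dy : Ys -> Ys -> R) (P : probability Om R) (X : Om -> Xs)
  (Y : Om -> Ys) (kappa : R.-pker Xs ~> Ys) (m : Xs -> Ys).
Hypotheses (mdy : measurable_fun setT (fun p : Ys * Ys => dy p.1 p.2))
  (mX : measurable_fun setT X) (mY : measurable_fun setT Y)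
  (mm : measurable_fun setT m).
Hypothesis hK : is_cond_distribution P X Y kappa.
Hypothesis indep : independent2 P X (fun w => dy (Y w) (m (X w))).

Let err (p : Xs * Ys) := dy p.2 (m p.1).

Let measurable_err : measurable_fun setT err.
Proof. exact: measurable_fun_dist (measurableT_comp mm measurable_fst). Qed.

Let measurable_cond_err : measurable_fun setT (fun w => dy (Y w) (m (X w))).
Proof. exact: measurable_fun_dist (measurableT_comp mm mX). Qed.

Lemma ae_cond_cdf t : {ae P, forall w,
  kappa (X w) [set y | dy y (m (X w)) <= t] =
  (cdf_of P (fun w => dy (Y w) (m (X w))) t)%:E}.
Proof.
have merr : measurable (err @^-1` `]-oo, t]) by exact: measurable_preimage.
have sectionE x : xsection (err @^-1` `]-oo, t]) x = [set y | dy y (m x) <= t].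
  by apply/seteqP; split => y; rewrite /xsection /= in_setE /= in_itv.
apply: (ae_eq_cst_of_integral_preimage
  (G := fun x => kappa x [set y | dy y (m x) <= t])
  (fine_ge0 (measure_ge0 _ _)) mX).
- have := measurable_fun_xsection_finite_kernel kappa (mem_set merr).
  by apply: eq_measurable_fun => x _; rewrite sectionE.
- by move=> x; exact: measure_ge0.
- move=> A mA; under eq_integral do rewrite -sectionE.
  rewrite -(cond_distribution_xsection mX mY hK mA merr).
  have -> : X @^-1` A `&` (fun w => (X w, Y w)) @^-1` (err @^-1` `]-oo, t]) =
      X @^-1` A `&` (fun w => dy (Y w) (m (X w))) @^-1` `]-oo, t] by [].
  rewrite indep // muleC /cdf_of fineK //; apply: fin_num_measure.
  by rewrite -preimage_itvNyc; exact: measurable_preimage.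
Qed.

Lemma ae_cond_cdf_rat : {ae P, forall w (q : rat),
  kappa (X w) [set y | dy y (m (X w)) <= ratr q] =
  (cdf_of P (fun w => dy (Y w) (m (X w))) (ratr q))%:E}.
Proof. by apply: ae_forall_countable => q; exact: ae_cond_cdf. Qed.

End cond_cdf.

Section cdf_of_limits.
Context d (T : measurableType d) (R : realType) (P : probability T R)
  (Z : T -> R).
Hypothesis mZ : measurable_fun setT Z.

Let cdf_ofE : cdf_of P Z = fine \o cdf (mfun_Sub (mem_set mZ) : {RV P >-> R}).
Proof.
apply/funext => t.
by rewrite /cdf_of /= /cdf /distribution /pushforward /= preimage_itvNyc.
Qed.

Lemma cvgy_cdf_of : cdf_of P Z t @[t --> +oo] --> (1 : R).
Proof. by rewrite cdf_ofE; apply: fine_cvg; exact: cvg_cdfy1. Qed.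

Lemma cvgNy_cdf_of : cdf_of P Z t @[t --> -oo] --> (0 : R).
Proof. by rewrite cdf_ofE; apply: fine_cvg; exact: cvg_cdfNy0. Qed.

End cdf_of_limits.

Lemma continuous_compact_unif (R : realType) (F : R -> R) (K : set R) (e : R) :
  continuous F -> compact K -> 0 < e -> exists2 d, 0 < d &
    forall s t, K s -> `|s - t| < d -> `|F s - F t| < e.
Proof.
move=> Fc cK e0; have e20 : 0 < e / 2 by rewrite divr_gt0.
have : \forall d \near 0^'+,
    K `<=` [set s | forall t, `|s - t| < d -> `|F s - F t| < e].
  apply: (compact_near_coveringP _).1 => // x _.
  have [r /= r0 Fr] := (nbhs_ballP _ _).1 (cvgr_dist_lt _ _ (Fc x) _ e20).
  exists (ball x (r / 2), [set d | 0 < d < r / 2]).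
    split; first by apply: nbhsx_ballx; rewrite divr_gt0.
    near=> d; apply/andP; split; near: d; first exact: nbhs_right_gt.
    by apply: nbhs_right_lt; rewrite divr_gt0.
  move=> [s d] [/= xs /andP[d0 dr]] t st; rewrite /ball /= in xs.
  have Fxs : `|F x - F s| < e / 2 by apply: Fr; rewrite /ball /=; lra.
  have Fxt : `|F x - F t| < e / 2.
    by apply: Fr; have := ler_distD s x t; rewrite /ball /=; lra.
  by have := ler_distD (F x) (F s) (F t); rewrite distrC in Fxs; lra.
move=> /(filterI (nbhs_right_gt 0)) /filter_ex [d [d0 Kd]].
by exists d => // s t Ks; exact: Kd.
Unshelve. all: by end_near. Qed.

Lemma continuous_cvg_infty_unif (R : realType) (F : R -> R) (l u : R) :
  continuous F -> F x @[x --> -oo] --> l -> F x @[x --> +oo] --> u ->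
  forall e, 0 < e -> exists2 d, 0 < d &
    forall s t, `|s - t| < d -> `|F s - F t| < e.
Proof.
move=> Fc Fl Fu e e0; have e20 : 0 < e / 2 by rewrite divr_gt0.
have [a [_ Fa]] := cvgr_dist_lt _ _ Fl _ e20.
have [b [_ Fb]] := cvgr_dist_lt _ _ Fu _ e20.
have [d d0 Fd] :=
  continuous_compact_unif Fc (@segment_compact _ (a - 1) (b + 1)) e0.
exists (Num.min d 1) => [|s t]; first by rewrite lt_min d0 ltr01.
rewrite lt_min => /andP[std st1].
have [sa|aS] := ltP s (a - 1).
  have [Fs Ft] : `|l - F s| < e / 2 /\ `|l - F t| < e / 2.
    by split; apply: Fa; move: st1; rewrite ltr_distlC; lra.
  by have := ler_distD l (F s) (F t); rewrite distrC in Fs; lra.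
have [bs|sb] := ltP (b + 1) s.
  have [Fs Ft] : `|u - F s| < e / 2 /\ `|u - F t| < e / 2.
    by split; apply: Fb; move: st1; rewrite ltr_distlC; lra.
  by have := ler_distD u (F s) (F t); rewrite distrC in Fs; lra.
by apply: Fd std; rewrite /= in_itv /= aS sb.
Qed.

Lemma measure_ball_cdf_close d (U : measurableType d) (R : realType)
    (dU : U -> U -> R) (nu : {measure set U -> \bar R}) (F : R -> R)
    (c c' : U) (e r : R) :
  is_metric dU -> measurable_fun setT (fun p : U * U => dU p.1 p.2) ->
  (nu setT < +oo)%E ->
  (forall q : rat, nu [set y | dU y c <= ratr q] = (F (ratr q))%:E) ->
  (forall s t, `|s - t| < r -> `|F s - F t| < e) ->
  dU c' c < r / 2 ->
  forall t, `|fine (nu [set y | dU y c' < t]) - F t| < e.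
Proof.
move=> [d0 sym tri] mdU nuT nuF Fr cc' t.
have r0 : 0 < r.
  by have := tri c' c c'; rewrite (proj2 (d0 c' c') erefl) (sym c c'); lra.
have mdist z : measurable_fun setT (dU ^~ z).
  by apply: measurable_fun_dist => //; exact: measurable_cst.
have mle z s : measurable [set y | dU y z <= s].
  by rewrite -preimage_itvNyc; exact: measurable_preimage.
have mlt z s : measurable [set y | dU y z < s].
  by rewrite -preimage_itvNyo; exact: measurable_preimage.
have finnu A : measurable A -> nu A \is a fin_num.
  move=> mA; rewrite ge0_fin_numE // (le_lt_trans _ nuT) //.
  by apply: le_measure; rewrite ?inE.
have [q1 /andP[]] : exists q : rat, ratr q \in `]t - r, t - r / 2[.
  by apply: rat_in_itvoo; lra.
have [q2 /andP[]] : exists q : rat, ratr q \in `]t + r / 2, t + r[.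
  by apply: rat_in_itvoo; lra.
rewrite !bnd_simp => q2a q2b q1a q1b.
have lo : F (ratr q1) <= fine (nu [set y | dU y c' < t]).
  rewrite -[F _]/(fine (F (ratr q1))%:E) -nuF.
  apply: fine_le; rewrite ?finnu //; apply: le_measure; rewrite ?inE //.
  by move=> y /= hy; have := tri y c c'; rewrite (sym c c'); lra.
have hi : fine (nu [set y | dU y c' < t]) <= F (ratr q2).
  rewrite -[F _]/(fine (F (ratr q2))%:E) -nuF.
  apply: fine_le; rewrite ?finnu //; apply: le_measure; rewrite ?inE //.
  by move=> y /= hy; have := tri y c' c; lra.
have F1 : `|F (ratr q1) - F t| < e by apply: Fr; rewrite ltr_distlC; lra.
have F2 : `|F (ratr q2) - F t| < e by apply: Fr; rewrite ltr_distlC; lra.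
move: F1 F2; rewrite !ltr_distlC => /andP[? ?] /andP[? ?].
by apply/andP; split; lra.
Qed.

Lemma sup_norm_le (R : realType) (T : pointedType) (f : T -> R) (e : R) :
  (forall t, `|f t| <= e) -> `|sup [set `|f t| | t in [set: T]]| <= e.
Proof.
move=> fe; set S := [set _ | _ in _].
have S0 : S `|f point| by exists point.
have ubS : ubound S e by move=> _ [t _ <-].
rewrite ger0_norm; first by apply: ge_sup => //; exists `|f point|.
by rewrite (le_trans _ (ub_le_sup _ S0)) //; exists e.
Qed.

Section outer_prob.
Context d (T : measurableType d) (R : realType) (P : probability T R).

Lemma outer_prob_ge0 A : (0 <= outer_prob P A)%E.
Proof. by apply/ereal_infP => _ [B _ <-]; exact: measure_ge0. Qed.

Lemma outer_prob_le1 A : (outer_prob P A <= 1)%E.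
Proof.
by rewrite -(probability_setT P); apply: ereal_inf_lbound; exists setT.
Qed.

Lemma le_outer_prob A B : A `<=` B ->
  fine (outer_prob P A) <= fine (outer_prob P B).
Proof.
have fin C : outer_prob P C \is a fin_num.
  rewrite ge0_fin_numE ?outer_prob_ge0 //.
  by rewrite (le_lt_trans (outer_prob_le1 C)) ?ltry.
move=> AB; apply: fine_le; rewrite ?fin //.
apply: le_ereal_inf => _ [C [mC BC] <-]; exists C => //; split => //.
exact: subset_trans BC.
Qed.

Lemma cvg_in_prob_control (Z Z' : nat -> T -> R) :
  (forall e, 0 < e -> exists2 r, 0 < r &
     forall n w, `|Z n w| <= r -> `|Z' n w| <= e) ->
  cvg_in_prob P Z -> cvg_in_prob P Z'.
Proof.
move=> ZZ' cZ e e0; have [r r0 hr] := ZZ' e e0.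
apply: (squeeze_cvgr _ (cvg_cst 0) (cZ r r0)).
apply: nearW => n; rewrite fine_ge0 ?outer_prob_ge0 //=.
apply: le_outer_prob => w /=; rewrite !ltNge; apply: contra; exact: hr.
Qed.

End outer_prob.

Theorem lemma3 (R : realType) (dX dY dO : measure_display)
  (Xs : measurableType dX) (Ys : measurableType dY) (Om : measurableType dO)
  (dx : Xs -> Xs -> R) (dy : Ys -> Ys -> R)
  (P : probability Om R)
  (X : Om -> Xs) (Y : Om -> Ys) (L : nat -> nat -> Om -> Xs * Ys)
  (kappa : R.-pker Xs ~> Ys)
  (m : Xs -> Ys) (mhat : nat -> Om -> Xs -> Ys) :
  (* metric spaces with their Borel sigma-algebras *)
  is_metric dx -> is_metric dy -> borel_of_metric dx -> borel_of_metric dy ->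
  (* regularity: d_Y is measurable for the product sigma-algebra (automatic
     for separable Y; makes R = d_Y(Y, m(X)) a random variable) *)
  measurable_fun [set: Ys * Ys] (fun p => dy p.1 p.2) ->
  (* random elements *)
  measurable_fun setT X -> measurable_fun setT Y ->
  (forall n i, measurable_fun setT (L n i)) ->
  (* kappa (a probability kernel) is a regular conditional distribution
     of Y given X *)
  (forall A B, measurable A -> measurable B ->
     P (X @^-1` A `&` Y @^-1` B) = (\int[P]_(w in X @^-1` A) kappa (X w) B)%E) ->
  (* (i) L_n = (L n 0, ..., L n (n-1)) are i.i.d. copies of (X,Y),
     independent of (X,Y) *)
  (forall n i, (i < n)%N -> forall C, measurable C ->
     P (L n i @^-1` C) = P ((fun w => (X w, Y w)) @^-1` C)) ->
  (forall n, mutually_independent P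
     (fun i : 'I_n.+1 => if (i < n)%N then L n i else (fun w => (X w, Y w)))) ->
  (* mhat_n is trained on the sample L_n *)
  (forall n w w', (forall i, (i < n)%N -> L n i w = L n i w') ->
     mhat n w = mhat n w') ->
  (* (ii) *)
  measurable_fun setT m ->
  {ae P, forall w, unique_frechet_mean dy (kappa (X w)) (m (X w))} ->
  independent2 P X (fun w => dy (Y w) (m (X w))) ->
  continuous (cdf_of P (fun w => dy (Y w) (m (X w)))) ->
  (* (iii) *)
  cvg_in_prob P (fun n w => dy (m (X w)) (mhat n w (X w))) ->
  (* conclusion, for a.e. x = X w *)
  {ae P, forall w,
     cvg_in_prob P (fun n w' => dy (mhat n w' (X w)) (m (X w))) ->
     cvg_in_prob P (fun n => Delta' kappa dy (mhat n)
                     (cdf_of P (fun w' => dy (Y w') (m (X w')))) (X w))}.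
Proof.
move=> _ dyM _ _ mdy mX mY _ hK _ _ _ mm _ indep Fc _.
have mR : measurable_fun setT (fun w => dy (Y w) (m (X w))).
  exact: measurable_fun_dist (measurableT_comp mm mX).
have Fu := continuous_cvg_infty_unif Fc (cvgNy_cdf_of P mR) (cvgy_cdf_of P mR).
apply: filterS (ae_cond_cdf_rat mdy mX mY mm hK indep) => w hw.
apply: cvg_in_prob_control => e e0.
have [r r0 Fr] := Fu e e0.
exists (r / 4) => [|n w' hn]; first by rewrite divr_gt0.
apply: sup_norm_le => t; apply/ltW.
apply: (measure_ball_cdf_close dyM mdy _ hw Fr) => //.
- by rewrite prob_kernel ltry.
- by rewrite (le_lt_trans (ler_norm _) (le_lt_trans hn _)) //; lra.
Qed.
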